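(* Let $g\in\mathscr{A}_3(\Pi)$ and let $(E_n)_{n\ge1}$ be an exhausting sequence of bounded subsets of $E$ such that $\lim_n\mathrm{tr}(\chi_{E_n}\Pi|g-1|^2\chi_{E_n^c}\Pi\chi_{E_n})=0$. Set $g_n=1+(g-1)\chi_{E_n}$. Then $L(g_n/g)\to0$ and $V(g_n/g)\to0$ as $n\to\infty$ (i.e. $g_n\to g$ in the topology $\mathscr{T}$).
   Context: $E$ is a locally compact complete separable metric space with $\sigma$-finite Borel measure $\mu$; $\Pi$ is a locally trace class orthogonal projection on $L^2(E,\mu)$ with kernel $\Pi(x,y)$ whose diagonal satisfies $\mathrm{tr}(\chi_B\Pi\chi_B)=\int_B\Pi(x,x)d\mu$. For Borel $f$, $L(f)=\int_E|f(x)-1|^3\Pi(x,x)d\mu(x)$ and $V(f)=\iint_{E^2}|f(x)-f(y)|^2|\Pi(x,y)|^2d\mu(x)d\mu(y)$. $\mathscr{A}_3(\Pi)$ is the set of positive Borel $g$ with $0<\inf g\le\sup g<\infty$, $L(g)<\infty$, $V(g)<\infty$, and for which some exhausting sequence of bounded sets $(E_n)$ satisfies $\lim_n\mathrm{tr}(\chi_{E_n}\Pi|g-1|^2\chi_{E_n^c}\Pi\chi_{E_n})=0$. The topology $\mathscr{T}$ on $\mathscr{A}_3(\Pi)$ is the one in which $g_n\to g$ iff $L(g_n/g)\to0$ and $V(g_n/g)\to0$. *)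

From mathcomp Require Import all_boot all_algebra.
From mathcomp Require Import all_classical all_reals all_analysis.
From mathcomp Require Export complex.
Set Implicit Arguments.
Unset Strict Implicit.
Unset Printing Implicit Defensive.
Import GRing.Theory Num.Theory.
Local Open Scope ring_scope.
Local Open Scope classical_set_scope.

Notation Borel T := (g_sigma_algebraType (@open T)).

Section Defs.
Context {R : realType} {T : completePseudoMetricType R}.

Definition cnorm2 (z : R[i]) : R := complex.Re z ^+ 2 + complex.Im z ^+ 2.

Definition bounded_in (B : set T) : Prop :=
  exists (x0 : T) (r : R), B `<=` ball x0 r.

Definition standing_space : Prop :=
  hausdorff_space T /\ locally_compact [set: T] /\
  (exists S : set T, countable S /\ dense S).

Definition exhausting (En : nat -> set T) : Prop :=
  (forall n, measurable (En n : set (Borel T))) /\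
  (forall n, bounded_in (En n)) /\
  (forall n, En n `<=` En n.+1) /\
  \bigcup_n En n = [set: T].

Variable mu : {measure set (Borel T) -> \bar R}.

(* K : E x E -> C is the integral kernel of a locally trace class orthogonal
   projection Pi on L^2(E, mu), with diagonal as in the context:
   - K is jointly Borel measurable;
   - K is Hermitian (Pi self-adjoint);
   - each row K(x, .) is in L^2(mu);
   - K is reproducing: int K(x,z) K(z,y) dmu(z) = K(x,y) (Pi^2 = Pi);
   - int_B K(x,x) dmu(x) < oo for every bounded Borel B (locally trace class). *)
Definition proj_kernel (K : T -> T -> R[i]) : Prop :=
  measurable_fun [set: Borel T * Borel T] (fun z => complex.Re (K z.1 z.2)) /\
  measurable_fun [set: Borel T * Borel T] (fun z => complex.Im (K z.1 z.2)) /\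
  (forall x y, K y x = conjc (K x y)) /\
  (forall x, (\int[mu]_y (cnorm2 (K x y))%:E < +oo)%E) /\
  (forall x y,
     complex.Re (K x y) =
       Rintegral mu [set: Borel T] (fun z => complex.Re (K x z * K z y)) /\
     complex.Im (K x y) =
       Rintegral mu [set: Borel T] (fun z => complex.Im (K x z * K z y))) /\
  (forall B : set T, measurable (B : set (Borel T)) -> bounded_in B ->
     (\int[mu]_(x in (B : set (Borel T))) (complex.Re (K x x))%:E < +oo)%E).

Variable K : T -> T -> R[i].

Definition Lpi (f : T -> R) : \bar R :=
  (\int[mu]_x (`|f x - 1| ^+ 3 * complex.Re (K x x))%:E)%E.

Definition Vpi (f : T -> R) : \bar R :=
  (\int[(mu \x mu)%E]_z
      (`|f z.1 - f z.2| ^+ 2 * cnorm2 (K z.1 z.2))%:E)%E.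

(* tr(chi_B Pi |g-1|^2 chi_{B^c} Pi chi_B), written through the kernel:
   this operator is A A^* with A = chi_B Pi |g-1| chi_{B^c}, whose trace is
   the squared Hilbert-Schmidt norm of A. *)
Definition trace_term (g : T -> R) (B : set T) : \bar R :=
  (\int[mu]_(x in (B : set (Borel T)))
     \int[mu]_(y in (~` B : set (Borel T)))
        (`|g y - 1| ^+ 2 * cnorm2 (K x y))%:E)%E.

Definition A3 (g : T -> R) : Prop :=
  measurable_fun [set: Borel T] g /\
  (exists c C : R, 0 < c /\ forall x, c <= g x <= C) /\
  (Lpi g < +oo)%E /\ (Vpi g < +oo)%E /\
  exists En : nat -> set T, exhausting En /\
    (fun n => trace_term g (En n)) @ \oo --> 0%E.

End Defs.

(* With f_n = g_n/g, f_n = 1 on E_n and f_n = 1/g off E_n; since g >= c > 0,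
   x |-> 1/x is Lipschitz on [c, oo), so |f_n - 1| <= |g - 1|/c pointwise.
   Hence the integrand of L(f_n) is dominated by c^-3 |g - 1|^3 Pi(x,x), which is
   integrable because L(g) < oo, and vanishes once x is in E_n: dominated
   convergence gives L(f_n) -> 0.  For V(f_n), split E^2 by membership in E_n:
   the integrand vanishes on E_n x E_n, is at most c^-4 |g(x) - g(y)|^2 |Pi|^2 on
   E_n^c x E_n^c (again handled by dominated convergence, using V(g) < oo), and on
   each mixed region it is at most c^-2 times the integrand of the trace term,
   by Fubini and the symmetry |Pi(x,y)| = |Pi(y,x)|. *)

From HB Require Import structures.
From mathcomp Require Import all_boot all_algebra.
From mathcomp Require Import all_classical all_reals all_analysis.
From mathcomp Require Import measurable_realfun ring.
Import order.Order.TTheory GRing.Theory Num.Theory.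
Local Open Scope ring_scope.
Local Open Scope classical_set_scope.

Section inverse_distance.
Context {R : realFieldType} (c : R).
Hypothesis c_gt0 : 0 < c.

Lemma dist_inv1_le (y : R) : c <= y -> `|y^-1 - 1| <= c^-1 * `|y - 1|.
Proof.
move=> cy; have y_gt0 : 0 < y by apply: lt_le_trans cy.
have -> : y^-1 - 1 = (1 - y) * y^-1 by field; rewrite gt_eqF.
rewrite normrM distrC (ger0_norm (ltW _)) ?invr_gt0 // mulrC.
by rewrite ler_wpM2r // lef_pV2.
Qed.

Lemma dist_inv_le (y z : R) : c <= y -> c <= z ->
  `|y^-1 - z^-1| <= c^-2 * `|y - z|.
Proof.
move=> cy cz; have y_gt0 : 0 < y by apply: lt_le_trans cy.
have z_gt0 : 0 < z by apply: lt_le_trans cz.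
have -> : y^-1 - z^-1 = (z - y) * (y * z)^-1 by field; rewrite !gt_eqF.
rewrite normrM distrC (ger0_norm (ltW _)) ?invr_gt0 ?mulr_gt0 // mulrC.
by rewrite ler_wpM2r // expr2 lef_pV2 ?posrE ?mulr_gt0 // ler_pM // ltW.
Qed.

End inverse_distance.

Section cnorm2.
Context {R : realType}.

Lemma cnorm2_ge0 (z : R[i]) : 0 <= cnorm2 z.
Proof. by rewrite /cnorm2 addr_ge0 // sqr_ge0. Qed.

Lemma cnorm2_conj (z : R[i]) : cnorm2 (conjc z) = cnorm2 z.
Proof. by case: z => a b; rewrite /cnorm2 /= sqrrN. Qed.

Lemma Re_mul_conjc (z : R[i]) : complex.Re (z * conjc z) = cnorm2 z.
Proof. by case: z => a b; rewrite /cnorm2 /=; ring. Qed.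

End cnorm2.

Section nonneg_integrals.
Local Open Scope ereal_scope.
Context d (X : measurableType d) (R : realType) (mu : {measure set X -> \bar R}).

Lemma ge0_integralZD (a b : R) (f h : X -> R) : (0 <= a)%R -> (0 <= b)%R ->
  (forall x, 0 <= f x)%R -> (forall x, 0 <= h x)%R ->
  measurable_fun setT f -> measurable_fun setT h ->
  \int[mu]_x (a * f x + b * h x)%:E =
    a%:E * \int[mu]_x (f x)%:E + b%:E * \int[mu]_x (h x)%:E.
Proof.
move=> a0 b0 f0 h0 mf mh; under eq_integral do rewrite EFinD !EFinM.
rewrite ge0_integralD //; last 4 first.
- by move=> x _; rewrite -EFinM lee_fin mulr_ge0.
- exact/measurable_EFinP/measurable_funM.
- by move=> x _; rewrite -EFinM lee_fin mulr_ge0.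
- exact/measurable_EFinP/measurable_funM.
rewrite !ge0_integralZl_EFin //.
- by move=> x _; rewrite lee_fin.
- exact/measurable_EFinP.
- by move=> x _; rewrite lee_fin.
- exact/measurable_EFinP.
Qed.

Lemma integral_cvg0_dominated (f : nat -> X -> R) (G : X -> R) :
  (forall n, measurable_fun setT (f n)) -> measurable_fun setT G ->
  \int[mu]_x (G x)%:E < +oo ->
  (forall n x, 0 <= f n x <= G x)%R ->
  (forall x, \forall n \near \oo, f n x = 0%R) ->
  \int[mu]_x (f n x)%:E @[n --> \oo] --> 0.
Proof.
move=> mf mG Gfin fG f_ev0.
have G0 x : (0 <= G x)%R by case/andP: (fG 0%N x) => /le_trans; apply.
have iG : mu.-integrable setT (EFin \o G).
  apply/integrableP; split; first exact/measurable_EFinP.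
  by under eq_integral do rewrite /= ger0_norm //.
have f_cvg : {ae mu, forall x, setT x -> (fun n => (f n x)%:E) @ \oo --> 0}.
  by apply: aeW => x _; apply: cvg_near_cst; apply: filterS (f_ev0 x) => n ->.
have f_le : {ae mu, forall x n, setT x -> `|(f n x)%:E| <= (G x)%:E}.
  by apply: aeW => x n _; case/andP: (fG n x) => f_ge0 f_le_G; rewrite gee0_abs.
have [_ _] := dominated_convergence measurableT
  (fun n => (measurable_EFinP _ _).2 (mf n)) (measurable_cst _) f_cvg iG f_le.
by rewrite integral0.
Qed.

End nonneg_integrals.

Section integral_prod_swap.
Local Open Scope ereal_scope.
Context {d1 d2} {T1 : measurableType d1} {T2 : measurableType d2} {R : realType}
  {m1 : {sigma_finite_measure set T1 -> \bar R}}
  {m2 : {sigma_finite_measure set T2 -> \bar R}}.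

Lemma ge0_integral_prod_swap (F : T1 * T2 -> \bar R) :
  (forall z, 0 <= F z) -> measurable_fun setT F ->
  \int[m2 \x m1]_z F (z.2, z.1) = \int[m1 \x m2]_z F z.
Proof.
move=> F0 mF; rewrite fubini_tonelli2 ?fubini_tonelli1 //.
exact: (measurableT_comp mF (@measurable_swap _ _ T2 T1)).
Qed.

End integral_prod_swap.

Lemma measurable_funV_gt0 d (X : measurableType d) (R : realType) (f : X -> R) :
  measurable_fun setT f -> (forall x, 0 < f x) ->
  measurable_fun setT (fun x => (f x)^-1).
Proof.
move=> mf f_gt0.
have inv_mD : measurable_fun (`]0, +oo[%classic : set R) GRing.inv.
  apply: open_continuous_measurable_fun; first exact: interval_open.
  move=> x; rewrite inE /= in_itv /= andbT => x_gt0.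
  by apply: inv_continuous; rewrite gt_eqF.
have f_pos : f @` setT `<=` `]0, +oo[%classic.
  by move=> _ [x _ <-] /=; rewrite in_itv /= andbT.
exact: measurable_comp (measurable_itv _) f_pos inv_mD mf.
Qed.

Section exhausting_sequence.
Context {R : realType} {T : completePseudoMetricType R} {E : nat -> set T}.
Hypothesis E_exh : exhausting E.

Lemma exhausting_measurable n : measurable (E n : set (Borel T)).
Proof. by case: E_exh. Qed.

Lemma exhausting_eventually (x : T) : \forall n \near \oo, x \in E n.
Proof.
case: E_exh => _ [_ [E_incr E_cover]].
have [N _ ENx] : (\bigcup_n E n) x by rewrite E_cover.
exists N => // n /= /subnK <-; rewrite inE.
by elim: (n - N)%N => // k IH; apply: E_incr.
Qed.

End exhausting_sequence.

Section projection_kernel.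
Context {R : realType} {T : completePseudoMetricType R}
  {mu : {measure set (Borel T) -> \bar R}} {K : T -> T -> R[i]}.
Hypothesis K_proj : proj_kernel mu K.

Lemma cnorm2_kernel_sym x y : cnorm2 (K y x) = cnorm2 (K x y).
Proof. by case: K_proj => _ [_ [K_herm _]]; rewrite K_herm cnorm2_conj. Qed.

Lemma kernel_diag_ge0 x : 0 <= complex.Re (K x x).
Proof.
case: K_proj => _ [_ [K_herm [_ [K_repr _]]]].
rewrite (K_repr x x).1; apply: fine_ge0; apply: integral_ge0 => y _.
by rewrite (K_herm x y) Re_mul_conjc lee_fin cnorm2_ge0.
Qed.

Lemma measurable_cnorm2_kernel :
  measurable_fun [set: Borel T * Borel T] (fun z => cnorm2 (K z.1 z.2)).
Proof.
by case: K_proj => mRe [mIm _]; apply: measurable_funD; apply: measurable_funX.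
Qed.

Lemma measurable_kernel_diag :
  measurable_fun [set: Borel T] (fun x => complex.Re (K x x)).
Proof.
have diag := measurable_fun_pair (@measurable_id _ (Borel T) setT)
  (@measurable_id _ (Borel T) setT).
by case: K_proj => mRe _; exact: measurableT_comp mRe diag.
Qed.

End projection_kernel.

Section truncation.
Context {R : realType} {T : completePseudoMetricType R}
  (mu : {measure set (Borel T) -> \bar R}) (K : T -> T -> R[i])
  (g : T -> R) (E : nat -> set T) (c : R).
Hypotheses (mu_sigma_finite : sigma_finite [set: Borel T] mu)
  (K_proj : proj_kernel mu K) (E_exh : exhausting E)
  (g_measurable : measurable_fun [set: Borel T] g)
  (c_gt0 : 0 < c) (g_ge : forall x, c <= g x).

(* [mu] itself, carrying the sigma-finite structure Fubini's theorem needs;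
   [mu_sf \x mu_sf] is convertible to the [mu \x mu] of [Vpi]. *)
Definition mu_sf : set (Borel T) -> \bar R := mu.
HB.instance Definition _ := Measure.on mu_sf.
HB.instance Definition _ :=
  @Measure_isSigmaFinite.Build _ _ _ mu_sf mu_sigma_finite.

Definition trunc_ratio n x := (1 + (g x - 1) * \1_(E n) x) / g x.

Lemma trunc_ratio_in n x : x \in E n -> trunc_ratio n x = 1.
Proof.
move=> xE; rewrite /trunc_ratio indicE xE mulr1 addrC subrK divff //.
by rewrite gt_eqF // (lt_le_trans c_gt0).
Qed.

Lemma trunc_ratio_out n x : x \notin E n -> trunc_ratio n x = (g x)^-1.
Proof. by move=> xE; rewrite /trunc_ratio indicE (negbTE xE) mulr0 addr0 mul1r. Qed.

Lemma dist_trunc_ratio1_le n x : `|trunc_ratio n x - 1| <= c^-1 * `|g x - 1|.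
Proof.
have [xE|xE] := boolP (x \in E n).
  by rewrite trunc_ratio_in // subrr normr0 mulr_ge0 // invr_ge0 ltW.
by rewrite trunc_ratio_out //; apply: dist_inv1_le.
Qed.

Lemma measurable_trunc_ratio n : measurable_fun [set: Borel T] (trunc_ratio n).
Proof.
apply: measurable_funM; last first.
  by apply: measurable_funV_gt0 => // x; apply: lt_le_trans (g_ge x).
apply: measurable_funD => //; apply: measurable_funM; last first.
  exact: measurable_indic (exhausting_measurable E_exh n).
exact: measurable_funB.
Qed.


Definition off_part n (z : Borel T * Borel T) :=
  `|g z.1 - g z.2| ^+ 2 * cnorm2 (K z.1 z.2) * \1_(~` E n) z.1 * \1_(~` E n) z.2.

Definition cross_part n (z : Borel T * Borel T) :=
  `|g z.2 - 1| ^+ 2 * cnorm2 (K z.1 z.2) * \1_(E n) z.1 * \1_(~` E n) z.2.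

Lemma off_part_ge0 n z : 0 <= off_part n z.
Proof. by rewrite /off_part !mulr_ge0 ?exprn_ge0 ?cnorm2_ge0 // indicE ler0n. Qed.

Lemma cross_part_ge0 n z : 0 <= cross_part n z.
Proof. by rewrite /cross_part !mulr_ge0 ?exprn_ge0 ?cnorm2_ge0 // indicE ler0n. Qed.

Let measurable_fst_comp (f : T -> R) : measurable_fun [set: Borel T] f ->
  measurable_fun [set: Borel T * Borel T] (fun z => f z.1).
Proof. by move=> mf; exact: measurableT_comp mf measurable_fst. Qed.

Let measurable_snd_comp (f : T -> R) : measurable_fun [set: Borel T] f ->
  measurable_fun [set: Borel T * Borel T] (fun z => f z.2).
Proof. by move=> mf; exact: measurableT_comp mf measurable_snd. Qed.

Let measurable_sqr_dist (f h : Borel T * Borel T -> R) :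
  measurable_fun setT f -> measurable_fun setT h ->
  measurable_fun [set: Borel T * Borel T] (fun z => `|f z - h z| ^+ 2).
Proof.
move=> mf mh; apply/measurable_funX/measurableT_comp; first exact: normr_measurable.
exact: measurable_funB.
Qed.

Lemma measurable_off_part n : measurable_fun setT (off_part n).
Proof.
have mEC := measurable_indic (measurableC (exhausting_measurable E_exh n)).
apply: measurable_funM; last (apply: measurable_snd_comp; exact: mEC).
apply: measurable_funM; last (apply: measurable_fst_comp; exact: mEC).
apply: measurable_funM; last exact: measurable_cnorm2_kernel K_proj.
by apply: measurable_sqr_dist; [exact: measurable_fst_comp|exact: measurable_snd_comp].
Qed.

Lemma measurable_cross_part n : measurable_fun setT (cross_part n).
Proof.
have mE := exhausting_measurable E_exh n; have mEC := measurableC mE.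
apply: measurable_funM; last (apply: measurable_snd_comp; exact: measurable_indic).
apply: measurable_funM; last (apply: measurable_fst_comp; exact: measurable_indic).
apply: measurable_funM; last exact: measurable_cnorm2_kernel K_proj.
by apply: measurable_sqr_dist => //; exact: measurable_snd_comp.
Qed.

Lemma measurable_cross_part_swap n :
  measurable_fun setT (fun z : Borel T * Borel T => cross_part n (z.2, z.1)).
Proof.
exact: measurableT_comp (measurable_cross_part n) (@measurable_swap _ _ (Borel T) _).
Qed.

Lemma trunc_ratio_dist_le n x y :
  `|trunc_ratio n x - trunc_ratio n y| ^+ 2 * cnorm2 (K x y) <=
  c^-2 ^+ 2 * off_part n (x, y) +
  c^-1 ^+ 2 * (cross_part n (x, y) + cross_part n (y, x)).
Proof.
rewrite /off_part /cross_part /= !indicE !in_setC (cnorm2_kernel_sym K_proj x y).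
have K_ge0 := cnorm2_ge0 (K x y).
have c_inv_ge0 : 0 <= c^-1 by rewrite invr_ge0 ltW.
have c_inv2_ge0 : 0 <= c^-2 by rewrite invr_ge0 exprn_ge0 // ltW.
have [xE|xE] := boolP (x \in E n); have [yE|yE] := boolP (y \in E n) => /=;
  rewrite ?mulr1 ?mulr0 ?mul0r ?add0r ?addr0 ?mulr0 ?addr0.
- by rewrite !trunc_ratio_in // subrr normr0 expr0n mul0r.
- rewrite trunc_ratio_in // trunc_ratio_out // mulrA -exprMn ler_wpM2r //.
  rewrite lerXn2r ?nnegrE ?mulr_ge0 // distrC.
  exact: dist_inv1_le.
- rewrite trunc_ratio_out // trunc_ratio_in // mulrA -exprMn ler_wpM2r //.
  rewrite lerXn2r ?nnegrE ?mulr_ge0 //.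
  exact: dist_inv1_le.
- rewrite !trunc_ratio_out // mulrA -exprMn ler_wpM2r //.
  rewrite lerXn2r ?nnegrE ?mulr_ge0 //.
  exact: dist_inv_le.
Qed.

Local Open Scope ereal_scope.

Lemma Lpi_trunc_ratio_cvg : Lpi mu K g < +oo ->
  Lpi mu K (trunc_ratio n) @[n --> \oo] --> 0.
Proof.
move=> Lg_fin; pose a := (c^-1 ^+ 3)%R.
have a_ge0 : (0 <= a)%R by rewrite exprn_ge0 // invr_ge0 ltW.
pose L_integrand (f : T -> R) x := (`|f x - 1| ^+ 3 * complex.Re (K x x))%R.
have L_integrand_ge0 f x : (0 <= L_integrand f x)%R.
  by rewrite mulr_ge0 ?exprn_ge0 ?(kernel_diag_ge0 K_proj).
have measurable_L_integrand f : measurable_fun [set: Borel T] f ->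
    measurable_fun [set: Borel T] (L_integrand f).
  move=> mf; apply: measurable_funM; last exact: (measurable_kernel_diag K_proj).
  apply/measurable_funX/measurableT_comp; first exact: normr_measurable.
  exact: measurable_funB.
apply: (@integral_cvg0_dominated _ _ _ mu _ (fun x => a * L_integrand g x)%R).
- by move=> n; apply: measurable_L_integrand; exact: measurable_trunc_ratio.
- by apply: measurable_funM => //; exact: measurable_L_integrand.
- under eq_integral do rewrite EFinM.
  rewrite ge0_integralZl_EFin //; first exact: lte_mul_pinfty.
  + by move=> x _; rewrite lee_fin L_integrand_ge0.
  + by apply/measurable_EFinP; exact: measurable_L_integrand.
- move=> n x; rewrite L_integrand_ge0 /= /L_integrand mulrA -exprMn.
  rewrite ler_wpM2r ?(kernel_diag_ge0 K_proj) // lerXn2r ?nnegrE ?dist_trunc_ratio1_le //.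
  by rewrite mulr_ge0 // invr_ge0 ltW.
- move=> x; apply: filterS (exhausting_eventually E_exh x) => n xE.
  by rewrite /L_integrand trunc_ratio_in // subrr normr0 expr0n mul0r.
Qed.

Lemma VpiE (f : T -> R) : Vpi mu K f =
  \int[mu_sf \x mu_sf]_z (`|f z.1 - f z.2| ^+ 2 * cnorm2 (K z.1 z.2))%:E.
Proof. by []. Qed.

Lemma integral_cross_part n :
  \int[mu_sf \x mu_sf]_z (cross_part n z)%:E = trace_term mu K g (E n).
Proof.
rewrite fubini_tonelli1 /fubini_F; first last.
- by move=> z; rewrite lee_fin cross_part_ge0.
- by apply/measurable_EFinP; exact: measurable_cross_part.
rewrite /trace_term [RHS]integral_mkcond; apply: eq_integral => x _.
rewrite patchE; case: ifPn => xE.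
  rewrite [RHS]integral_mkcond; apply: eq_integral => y _.
  rewrite patchE /cross_part /= !indicE xE mulr1.
  by case: ifPn => yE; rewrite ?mulr1 ?mulr0.
by apply: integral0_eq => y _; rewrite /cross_part /= indicE (negbTE xE) mulr0 mul0r.
Qed.

Lemma integral_cross_part_sym n :
  \int[mu_sf \x mu_sf]_z (cross_part n z + cross_part n (z.2, z.1))%:E =
  trace_term mu K g (E n) + trace_term mu K g (E n).
Proof.
under eq_integral do rewrite EFinD.
have cross_ge0 z : 0 <= (cross_part n z)%:E by rewrite lee_fin cross_part_ge0.
have m_cross : measurable_fun setT (fun z => (cross_part n z)%:E).
  by apply/measurable_EFinP; exact: measurable_cross_part.
rewrite ge0_integralD //; last first.
  by apply/measurable_EFinP; exact: measurable_cross_part_swap.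
by rewrite (ge0_integral_prod_swap (fun z => (cross_part n z)%:E)) ?integral_cross_part.
Qed.

Lemma integral_off_part_cvg : Vpi mu K g < +oo ->
  \int[mu_sf \x mu_sf]_z (off_part n z)%:E @[n --> \oo] --> 0.
Proof.
move=> Vg_fin; pose G (z : Borel T * Borel T) :=
  (`|g z.1 - g z.2| ^+ 2 * cnorm2 (K z.1 z.2))%R.
apply: (@integral_cvg0_dominated _ _ _ _ _ G).
- exact: measurable_off_part.
- apply: measurable_funM; last exact: measurable_cnorm2_kernel K_proj.
  by apply: measurable_sqr_dist; [exact: measurable_fst_comp|exact: measurable_snd_comp].
- exact: Vg_fin.
- move=> n z; rewrite off_part_ge0 /= /off_part -mulrA /G ler_piMr //.
  by rewrite mulr_ge0 ?exprn_ge0 ?cnorm2_ge0.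
- move=> z; apply: filterS (exhausting_eventually E_exh z.1) => n zE.
  by rewrite /off_part indicE in_setC zE !mulr0 mul0r.
Qed.

Lemma Vpi_trunc_ratio_le n : Vpi mu K (trunc_ratio n) <=
  (c^-2 ^+ 2)%:E * \int[mu_sf \x mu_sf]_z (off_part n z)%:E +
  (c^-1 ^+ 2)%:E * (trace_term mu K g (E n) + trace_term mu K g (E n)).
Proof.
have c_inv_ge0 : (0 <= c^-1 ^+ 2)%R by rewrite exprn_ge0 // invr_ge0 ltW.
have c_inv2_ge0 : (0 <= c^-2 ^+ 2)%R by rewrite exprn_ge0 // invr_ge0 exprn_ge0 // ltW.
have m_cross_sym :
    measurable_fun setT (fun z => cross_part n z + cross_part n (z.2, z.1))%R.
  exact: measurable_funD (measurable_cross_part n) (measurable_cross_part_swap n).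
rewrite -integral_cross_part_sym -ge0_integralZD //; first last.
- exact: measurable_off_part.
- by move=> z; rewrite addr_ge0 ?cross_part_ge0.
- exact: off_part_ge0.
rewrite VpiE; apply: ge0_le_integral => //.
- by move=> z _; rewrite lee_fin mulr_ge0 ?exprn_ge0 ?cnorm2_ge0.
- apply/measurable_EFinP/measurable_funM; last exact: measurable_cnorm2_kernel K_proj.
  by apply: measurable_sqr_dist; [apply: measurable_fst_comp|apply: measurable_snd_comp];
    exact: measurable_trunc_ratio.
- apply/measurable_EFinP/measurable_funD; apply: measurable_funM => //.
  exact: measurable_off_part.
- by move=> [x y] _; rewrite lee_fin; exact: trunc_ratio_dist_le.
Qed.

Lemma Vpi_trunc_ratio_cvg : Vpi mu K g < +oo ->
  trace_term mu K g (E n) @[n --> \oo] --> 0 ->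
  Vpi mu K (trunc_ratio n) @[n --> \oo] --> 0.
Proof.
move=> Vg_fin tr_cvg0.
apply: (@squeeze_cvge _ _ _ _ (cst 0) _ (fun n =>
  (c^-2 ^+ 2)%:E * \int[mu_sf \x mu_sf]_z (off_part n z)%:E +
  (c^-1 ^+ 2)%:E * (trace_term mu K g (E n) + trace_term mu K g (E n)))).
- apply: nearW => n; rewrite Vpi_trunc_ratio_le andbT VpiE.
  by apply: integral_ge0 => z _; rewrite lee_fin mulr_ge0 ?exprn_ge0 ?cnorm2_ge0.
- exact: cvg_cst.
- have := cvgeD _ (cvgeZl (y := (c^-2 ^+ 2)%:E) _ (integral_off_part_cvg Vg_fin))
    (cvgeZl (y := (c^-1 ^+ 2)%:E) _ (cvgeD _ tr_cvg0 tr_cvg0)).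
  by rewrite adde0 !mule0 adde0; apply.
Qed.

End truncation.

Arguments Lpi_trunc_ratio_cvg {R T mu K g E c}.
Arguments Vpi_trunc_ratio_cvg {R T mu K g E c}.

Theorem lemma7p6 (R : realType) (T : completePseudoMetricType R)
  (mu : {measure set (Borel T) -> \bar R})
  (K : T -> T -> R[i]) (g : T -> R) (En : nat -> set T) :
  standing_space (T := T) ->
  sigma_finite [set: Borel T] mu ->
  proj_kernel mu K ->
  A3 mu K g ->
  exhausting En ->
  (fun n => trace_term mu K g (En n)) @ \oo --> 0%E ->
  let gn : nat -> T -> R := fun n x => 1 + (g x - 1) * \1_(En n) x in
  ((fun n : nat => Lpi mu K (fun x => gn n x / g x)) @ \oo --> 0%E) /\
  ((fun n : nat => Vpi mu K (fun x => gn n x / g x)) @ \oo --> 0%E).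
Proof.
move=> _ mu_sigma_finite K_proj [g_measurable [[c [C [c_gt0 g_bounds]]]]].
move=> [Lg_fin [Vg_fin _]] En_exh tr_cvg0 gn.
have g_ge x : c <= g x by case/andP: (g_bounds x).
split.
- exact: Lpi_trunc_ratio_cvg K_proj En_exh g_measurable c_gt0 g_ge Lg_fin.
- exact: Vpi_trunc_ratio_cvg mu_sigma_finite K_proj En_exh g_measurable c_gt0 g_ge
    Vg_fin tr_cvg0.
Qed.
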